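(* Consider the coupled oscillator model $\dot\theta_i=\omega_i-\sum_{j=1}^n a_{ij}\sin(\theta_i-\theta_j)$, $i=1,\dots,n$, with $\omega\in\mathbf 1_n^\perp$, on a connected weighted undirected graph $G=(V,E)$ with symmetric weights $a_{ij}=a_{ji}>0$ for $\{i,j\}\in E$ and $a_{ij}=0$ otherwise. If a solution $\theta(t)$ satisfies $\theta(t)\in\Delta^G(\gamma)$ for all $t\ge0$, for some $\gamma<\pi/2$, then there exists an equilibrium $\theta^*\in\Delta^G(\gamma)$ and $\theta(t)$ achieves exponential frequency synchronization, converging to $[\theta^*]$.
   Context: $\mathbf 1_n^\perp$ is the set of vectors orthogonal to $\mathbf 1_n$. For $\gamma\in[0,\pi]$, $\Delta^G(\gamma)=\{\theta\in\mathbb T^n: |\theta_i-\theta_j|\le\gamma\text{ for all edges }\{i,j\}\in E\}$. For an equilibrium $\theta^*$, $[\theta^*]=\{\theta^*+c\mathbf 1_n: c\in\mathbb R\}$. Exponential frequency synchronization means $\dot\theta_i(t)-\dot\theta_j(t)\to0$ exponentially fast for all $i,j$. *)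

From HB Require Import structures.
From mathcomp Require Import all_boot all_order all_algebra.
From mathcomp Require Import all_classical all_reals all_analysis.
Set Implicit Arguments. Unset Strict Implicit. Unset Printing Implicit Defensive.
Import Order.TTheory GRing.Theory Num.Theory.
Local Open Scope ring_scope.

Definition kuramoto_rhs (R : realType) (n : nat) (a : 'I_n -> 'I_n -> R)
  (omega : 'I_n -> R) (x : 'I_n -> R) (i : 'I_n) : R :=
  omega i - \sum_(j < n) a i j * sin (x i - x j).

Definition edge_rel (R : realType) (n : nat) (a : 'I_n -> 'I_n -> R) : rel 'I_n :=
  fun i j => 0 < a i j.

(* Geodesic distance on the circle between the angles x and y (mod 2pi)
   is at most g. *)
Definition circ_le (R : realType) (x y g : R) : Prop :=
  exists k : int, `|x - y - k%:~R * (2 * pi)| <= g.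

Definition circ_lt (R : realType) (x y e : R) : Prop :=
  exists k : int, `|x - y - k%:~R * (2 * pi)| < e.

Definition DeltaG (R : realType) (n : nat) (a : 'I_n -> 'I_n -> R) (g : R)
  (x : 'I_n -> R) : Prop :=
  forall i j : 'I_n, edge_rel a i j -> circ_le (x i) (x j) g.

Definition is_equilibrium (R : realType) (n : nat) (a : 'I_n -> 'I_n -> R)
  (omega : 'I_n -> R) (x : 'I_n -> R) : Prop :=
  forall i, kuramoto_rhs a omega x i = 0.

(* theta(t) converges (in T^n) to the set [x] = {x + c 1_n : c in R}:
   the distance from theta(t) to [x] tends to 0. *)
Definition converges_to_class (R : realType) (n : nat) (theta : R -> 'I_n -> R)
  (x : 'I_n -> R) : Prop :=
  forall e : R, 0 < e -> exists T : R, forall t : R, T <= t ->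
    exists c : R, forall i : 'I_n, circ_lt (theta t i) (x i + c) e.

(* Along a solution the frequencies nu = f(theta) obey the linear
   time-varying consensus dynamics d nu_i/dt = - sum_j a_ij cos(theta_i - theta_j)
   (nu_i - nu_j).  Inside Delta^G(gamma) with gamma < pi/2 every weight
   a_ij cos(theta_i - theta_j) is at least cos gamma a_ij > 0, and nu sums to
   zero, so a Poincare inequality for the connected graph turns
   V = sum_i nu_i^2 into a strict Lyapunov function: V' <= - lam V.  Hence the
   frequencies decay exponentially, each phase converges exponentially to a
   limit theta*_i, and passing to the limit in the equation and in the
   constraints shows that theta* is an equilibrium in Delta^G(gamma). *)
From HB Require Import structures.
From mathcomp Require Import all_boot all_order all_algebra.
From mathcomp Require Import all_classical all_reals all_analysis.
From mathcomp Require Import lra ring zify.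
Import Order.TTheory GRing.Theory Num.Theory.
Local Open Scope ring_scope.

Section RealAnalysis.
Context {R : realType}.
Implicit Types (f df : R -> R) (mu t : R).

Lemma derivable_of_is_derive {x : R} {f} {d : R} : is_derive x 1 f d -> derivable f x 1.
Proof. by move=> H; exact: ex_derive. Qed.

Lemma derive_le0_nincr f df (a : R) :
  (forall x, a < x -> is_derive x 1 f (df x)) ->
  (forall x, a < x -> df x <= 0) ->
  forall x y, a < x -> x <= y -> f y <= f x.
Proof.
move=> Hd Hn x y ax xy.
have Hi z : x <= z -> is_derive z 1 f (df z) by move=> xz; apply/Hd/(lt_le_trans ax).
apply: (@ler0_derive1_le_cc R f x y); rewrite ?in_itv /= ?lexx ?xy //.
- by move=> z; rewrite in_itv /= => /andP[/ltW xz _]; exact: derivable_of_is_derive (Hi z xz).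
- move=> z; rewrite in_itv /= => /andP[xz _].
  rewrite derive1E (@derive_val _ _ _ _ _ _ _ (Hi z (ltW xz))); exact/Hn/(lt_trans ax).
- apply: derivable_within_continuous => z; rewrite in_itv /= => /andP[xz _].
  exact: derivable_of_is_derive (Hi z xz).
Qed.

Lemma is_derive_expRM mu t : is_derive t 1 (fun s => expR (mu * s)) (mu * expR (mu * t)).
Proof.
have Hlin : is_derive t 1 (fun s => mu * s) mu.
  by have := is_deriveZ mu (is_derive_id t 1); rewrite /GRing.scale /= mulr1.
by apply: is_derive_eq (is_derive1_comp (is_derive_expR _) Hlin) _; rewrite mulrC.
Qed.

(* With e the claimed error bound, g + e is nonincreasing and g - e is
   nondecreasing; the limit is the supremum of g - e. *)
Lemma exp_rate_limit (g dg : R -> R) (D mu : R) : 0 < mu ->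
  (forall t, 0 < t -> is_derive t 1 g (dg t)) ->
  (forall t, 0 < t -> `|dg t| <= D * expR (- (mu * t))) ->
  exists L, forall t, 0 < t -> `|g t - L| <= D / mu * expR (- (mu * t)).
Proof.
move=> mu0 Hg Hb.
pose e s := D / mu * expR (- (mu * s)).
have He t : is_derive t 1 e (- D * expR (- (mu * t))).
  have -> : e = fun s => D / mu * expR (- mu * s) by apply/funext => s; rewrite mulNr.
  apply: is_derive_eq (is_deriveZ (D / mu) (is_derive_expRM (- mu) t)) _.
  by rewrite /GRing.scale /= mulrA mulrN divfK ?gt_eqF // [- mu * t]mulNr.
have D0 : 0 <= D.
  have := le_trans (normr_ge0 _) (Hb 1 ltr01).
  by rewrite pmulr_lge0 // expR_gt0.
have e0 s : 0 <= e s.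
  by apply: mulr_ge0; [exact: divr_ge0 D0 (ltW mu0) | exact: ltW (expR_gt0 _)].
have Hup : forall x y, 0 < x -> x <= y -> g y + e y <= g x + e x.
  apply: (@derive_le0_nincr (fun s => g s + e s) (fun t => dg t - D * expR (- (mu * t)))).
    by move=> t t0; rewrite -mulNr; exact: is_deriveD (Hg t t0) (He t).
  by move=> t t0; have := Hb t t0; have := ler_norm (dg t); lra.
have Hlow : forall x y, 0 < x -> x <= y -> - (g y - e y) <= - (g x - e x).
  apply: (@derive_le0_nincr (fun s => - (g s - e s)) (fun t => - (dg t + D * expR (- (mu * t))))).
    move=> t t0; rewrite -[_ * _]opprK -mulNr.
    exact: is_deriveN (is_deriveB (Hg t t0) (He t)).
  by move=> t t0; have := Hb t t0; have := ler_norm (- dg t); rewrite normrN; lra.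
have low_le_up s t : 0 < s -> 0 < t -> g s - e s <= g t + e t.
  move=> s0 t0; case: (leP s t) => st.
    by have := Hlow s t s0 st; have := e0 t; lra.
  by have := Hup t s t0 (ltW st); have := e0 s; lra.
pose A := [set g t - e t | t in [set t : R | 0 < t]]%classic.
have A0 : (A !=set0)%classic by exists (g 1 - e 1); exists 1 => //; exact: ltr01.
have Aub : has_ubound A.
  by exists (g 1 + e 1) => y [s s0 <-]; apply: low_le_up => //; exact: ltr01.
exists (sup A) => t t0.
have h1 : g t - e t <= sup A by apply: ub_le_sup => //; exists t.
have h2 : sup A <= g t + e t by apply: ge_sup => // y [s s0 <-]; exact: low_le_up.
rewrite ler_norml -/(e t); lra.
Qed.

Lemma gronwall_exp_decay f df (lam : R) :
  (forall t, 0 < t -> is_derive t 1 f (df t)) ->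
  (forall t, 0 < t -> df t <= - (lam * f t)) ->
  forall s t, 0 < s -> s <= t -> f t <= f s * expR (- (lam * (t - s))).
Proof.
move=> Hf Hdf s t s0 st.
have Hmono : forall x y, 0 < x -> x <= y ->
    f y * expR (lam * y) <= f x * expR (lam * x).
  apply: (@derive_le0_nincr _
    (fun x => f x * (lam * expR (lam * x)) + expR (lam * x) * df x)).
    by move=> x x0; exact: is_derive_eq (is_deriveM (Hf x x0) (is_derive_expRM lam x)) _.
  move=> x x0; have := Hdf x x0; have := expR_gt0 (lam * x).
  set E := expR _ => E0 H.
  have -> : f x * (lam * E) + E * df x = E * (df x + lam * f x) by ring.
  by rewrite pmulr_rle0 //; lra.
rewrite -(ler_pM2r (expR_gt0 (lam * t))) (le_trans (Hmono s t s0 st)) //.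
by rewrite -mulrA -expRD; have -> : - (lam * (t - s)) + lam * t = lam * s by ring.
Qed.

Lemma exp_decay_eventually_lt (K : R) {mu eps : R} : 0 < mu -> 0 < eps ->
  exists2 T, 0 < T & forall t, T <= t -> K * expR (- (mu * t)) < eps.
Proof.
move=> mu0 e0; case: (leP K 0) => K0.
  exists 1 => // t _; apply: le_lt_trans e0.
  by rewrite mulr_le0_ge0 // ltW // expR_gt0.
have Ke : 0 < K / eps by rewrite divr_gt0.
exists ((1 + `|ln (K / eps)|) / mu) => [|t Tt]; first by rewrite divr_gt0 // ltr_pwDl.
have lnlt : ln (K / eps) < mu * t.
  have : mu * ((1 + `|ln (K / eps)|) / mu) <= mu * t by rewrite ler_pM2l.
  rewrite mulrC divfK ?gt_eqF //; have := ler_norm (ln (K / eps)); lra.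
have : expR (- (mu * t)) < expR (- ln (K / eps)) by rewrite ltr_expR ltrN2.
rewrite (expRN (ln (K / eps))) lnK ?posrE // invf_div => H.
by rewrite -(ltr_pM2l K0) mulrCA divff ?gt_eqF // mulr1 in H.
Qed.

Lemma le_of_le_add_exp_decay {x y : R} (K : R) {mu : R} (T : R) : 0 < mu ->
  (forall t, T <= t -> x <= y + K * expR (- (mu * t))) -> x <= y.
Proof.
move=> mu0 H; rewrite leNgt; apply/negP => yx.
have [T' _ HT'] := exp_decay_eventually_lt K mu0 (ltac:(by rewrite subr_gt0) : 0 < x - y).
have := HT' (Num.max T T') ltac:(by rewrite le_max lexx orbT).
have := H (Num.max T T') ltac:(by rewrite le_max lexx); lra.
Qed.

Lemma norm_le_of_sqr_le_exp_decay (x W mu t : R) : 0 <= W ->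
  x ^+ 2 <= W * expR (- ((2 * mu) * t)) -> `|x| <= (1 + W) * expR (- (mu * t)).
Proof.
move=> W0 H.
have y0 : 0 <= (1 + W) * expR (- (mu * t)).
  by rewrite mulr_ge0 ?addr_ge0 // ltW // expR_gt0.
rewrite -(@ler_pXn2r R 2) ?nnegrE ?normr_ge0 //.
rewrite real_normK ?num_real // exprMn [expR _ ^+ 2]expr2 -expRD.
have -> : - (mu * t) + - (mu * t) = - ((2 * mu) * t) by ring.
apply: (le_trans H); rewrite ler_pM2r ?expR_gt0 //.
have := sqr_ge0 W; rewrite !expr2; lra.
Qed.

Lemma ler_dist_sin (x y : R) : `|sin x - sin y| <= `|x - y|.
Proof.
wlog xy : x y / y <= x.
  move=> W; case: (leP y x) => [|/ltW yx]; first exact: W.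
  by rewrite distrC (distrC x); exact: W.
have [c _ ->] := @MVT_segment R sin cos y x xy (fun z _ => is_derive_sin z)
  (derivable_within_continuous (fun z _ => derivable_of_is_derive (is_derive_sin z))).
by rewrite normrM ler_piMl // ler_norml cos_le1 cos_geN1.
Qed.

Lemma cosDz2pi (z : R) (k : int) : cos (z + k%:~R * (2 * pi)) = cos z.
Proof.
have E (m : nat) : m%:R * (2 * pi) = (pi *+ 2) *+ m :> R by rewrite !mulr_natl.
case: k => m; first by rewrite -[Posz m]/(m%:Z) pmulrn E (periodicn (@cosD2pi R)).
rewrite NegzE mulrNz -[(- (m.+1)%:R)]/(- (m.+1)%:R : R) mulNr E.
by rewrite -{2}[z](subrK ((pi *+ 2) *+ m.+1)) (periodicn (@cosD2pi R)).
Qed.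

Lemma cos_ge_circ_le (x y g : R) : 0 <= g -> g < pi / 2 ->
  circ_le x y g -> cos g <= cos (x - y).
Proof.
move=> g0 gpi [k Hk].
rewrite -[x - y](subrK (k%:~R * (2 * pi))) cosDz2pi.
set w := x - y - _ in Hk *.
have pi0 : 0 < pi :> R := pi_gt0 R.
have gle : g <= pi by have := ltW gpi; lra.
have -> : cos w = cos `|w| by case: (ger0P w) => _ //; rewrite cosN.
rewrite leNgt ltr_cos ?in_itv /= ?g0 ?gle ?normr_ge0 ?(le_trans Hk) //.
by rewrite -leNgt.
Qed.

Lemma intr_inj_dist_lt1 (k k' : int) : `|(k%:~R - k'%:~R : R)| < 1 -> k = k'.
Proof.
rewrite -intrB -intr_norm -[1 : R]/(1%:~R) ltr_int => H.
apply/eqP; rewrite -subr_eq0 -normr_eq0; move: H.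
have := normr_ge0 (k - k'); lia.
Qed.

End RealAnalysis.

Section SumIdentities.
Context {R : realFieldType}.

Lemma sum_antisym_eq0 {n} (u : 'I_n -> 'I_n -> R) : (forall i j, u i j = - u j i) ->
  \sum_(i < n) \sum_(j < n) u i j = 0.
Proof.
move=> Hu; have : \sum_(i < n) \sum_(j < n) u i j = - \sum_(i < n) \sum_(j < n) u i j.
  rewrite {1}exchange_big /= -sumrN; apply: eq_bigr => j _.
  by rewrite -sumrN; apply: eq_bigr => i _; exact: Hu.
set S := \sum_(i < n) _; lra.
Qed.

(* Discrete integration by parts: symmetrizing in (i, j) gives
   2 x_i (x_i - x_j) + 2 x_j (x_j - x_i) = 2 (x_i - x_j)^2. *)
Lemma sum_mul_sym_weighted_diff {n} (w : 'I_n -> 'I_n -> R) (x : 'I_n -> R) :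
  (forall i j, w i j = w j i) ->
  \sum_(i < n) (2 * x i) * (\sum_(j < n) w i j * (x i - x j)) =
  \sum_(i < n) \sum_(j < n) w i j * (x i - x j) ^+ 2.
Proof.
move=> w_sym; pose F i j := w i j * (x i * (x i - x j)).
have -> : \sum_(i < n) (2 * x i) * (\sum_(j < n) w i j * (x i - x j)) =
    \sum_(i < n) \sum_(j < n) F i j + \sum_(i < n) \sum_(j < n) F i j.
  rewrite -big_split /=; apply: eq_bigr => i _; rewrite -big_split mulr_sumr /=.
  by apply: eq_bigr => j _; rewrite /F; ring.
have -> : \sum_(i < n) \sum_(j < n) w i j * (x i - x j) ^+ 2 =
    \sum_(i < n) \sum_(j < n) F i j + \sum_(i < n) \sum_(j < n) F j i.
  rewrite -big_split /=; apply: eq_bigr => i _; rewrite -big_split /=.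
  by apply: eq_bigr => j _; rewrite /F (w_sym j i); ring.
by rewrite [in RHS](exchange_big _ _ _ _ _ (fun i j => F j i)).
Qed.

Lemma sqr_le_sum_sqr_sub {n} (x : 'I_n -> R) i : \sum_(j < n) x j = 0 ->
  x i ^+ 2 <= \sum_(j < n) (x i - x j) ^+ 2.
Proof.
move=> x_sum0.
rewrite (eq_bigr (fun j => (x i ^+ 2 + x j ^+ 2) - (2 * x i) * x j)); last first.
  by move=> j _; rewrite sqrrB mulr2n -mulrA mulr_natl; lra.
have E : \sum_(j < n) 2 * x i * x j = 2 * x i * \sum_(j < n) x j by rewrite mulr_sumr.
rewrite sumrB big_split /= E x_sum0 mulr0 subr0 sumr_const card_ord.
have : 0 <= \sum_(j < n) x j ^+ 2 by apply: sumr_ge0 => j _; exact: sqr_ge0.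
have : x i ^+ 2 <= x i ^+ 2 *+ n.
  by case: n x i {x_sum0 E} => [|m] x [k hk] //; rewrite mulrSr lerDr mulrn_wge0 ?sqr_ge0.
lra.
Qed.

Lemma ler_term_sum {n} (F : 'I_n -> R) i : (forall k, 0 <= F k) -> F i <= \sum_(k < n) F k.
Proof. by move=> F_ge0; rewrite (bigD1 i) //= lerDl sumr_ge0. Qed.

End SumIdentities.

Section DirichletForm.
Context {R : realType} {n : nat} (a : 'I_n -> 'I_n -> R).
Hypothesis a_ge0 : forall i j, 0 <= a i j.

Definition dirichlet_form (x : 'I_n -> R) : R :=
  \sum_(i < n) \sum_(j < n) a i j * (x i - x j) ^+ 2.

Lemma dirichlet_form_ge0 x : 0 <= dirichlet_form x.
Proof. by do 2 (apply: sumr_ge0 => ? _); rewrite mulr_ge0 ?sqr_ge0. Qed.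

Lemma edge_le_dirichlet_form x u v : a u v * (x u - x v) ^+ 2 <= dirichlet_form x.
Proof.
rewrite /dirichlet_form (bigD1 u) //= (bigD1 v) //= -addrA lerDl.
apply: addr_ge0; first by apply: sumr_ge0 => j _; rewrite mulr_ge0 ?sqr_ge0.
by do 2 (apply: sumr_ge0 => ? _); rewrite mulr_ge0 ?sqr_ge0.
Qed.

(* Along a path i = u_0, ..., u_m = j, (x_i - x_{u_{k+1}})^2 is at most twice
   (x_i - x_{u_k})^2 plus twice the edge term (x_{u_k} - x_{u_{k+1}})^2. *)
Lemma connect_sqr_sub_le_dirichlet_form i j : connect (edge_rel a) i j ->
  exists2 K, 0 <= K & forall x, (x i - x j) ^+ 2 <= K * dirichlet_form x.
Proof.
move=> /connectP [p Hp ->].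
suff : forall u, path (edge_rel a) u p ->
    (exists2 K, 0 <= K & forall x, (x i - x u) ^+ 2 <= K * dirichlet_form x) ->
    exists2 K, 0 <= K & forall x, (x i - x (last u p)) ^+ 2 <= K * dirichlet_form x.
  by apply=> //; exists 0 => // x; rewrite subrr expr0n /= mul0r.
elim: p {Hp} => [|v p IH] u //= /andP [euv Hp] [K K0 HK]; apply: IH => //.
have av : 0 < a u v := euv.
exists (2 * K + 2 / a u v).
  by apply: addr_ge0; [exact: mulr_ge0 | exact: divr_ge0 (ltW av)].
move=> x; have := HK x; have := dirichlet_form_ge0 x.
have edge : (x u - x v) ^+ 2 <= (a u v)^-1 * dirichlet_form x.
  by rewrite -(ler_pM2l av) mulVKf ?gt_eqF //; exact: edge_le_dirichlet_form.
have tri : (x i - x v) ^+ 2 <= 2 * (x i - x u) ^+ 2 + 2 * (x u - x v) ^+ 2.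
  rewrite -[x i - x v](subrKA (x u)); set A := x i - x u; set B := x u - x v.
  by have := sqr_ge0 (A - B); rewrite !expr2; lra.
have -> : (2 * K + 2 / a u v) * dirichlet_form x =
    2 * (K * dirichlet_form x) + 2 * ((a u v)^-1 * dirichlet_form x) by ring.
move: edge tri; set P := K * _; set Q := _^-1 * _; lra.
Qed.

Lemma poincare_dirichlet_form : (forall i j, connect (edge_rel a) i j) ->
  exists2 K, 0 < K & forall x, \sum_(i < n) x i = 0 ->
    \sum_(i < n) x i ^+ 2 <= K * dirichlet_form x.
Proof.
move=> conn.
have /choice [Kf HKf] : forall ij : 'I_n * 'I_n, exists K, 0 <= K /\
    forall x, (x ij.1 - x ij.2) ^+ 2 <= K * dirichlet_form x.
  by move=> [i j]; have [K K0 HK] := @connect_sqr_sub_le_dirichlet_form i j (conn i j); exists K.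
have S0 : 0 <= \sum_(i < n) \sum_(j < n) Kf (i, j).
  by apply: sumr_ge0 => i _; apply: sumr_ge0 => j _; case: (HKf (i, j)).
exists (1 + \sum_(i < n) \sum_(j < n) Kf (i, j)) => [|x x_sum0]; first lra.
apply: (@le_trans _ _ (\sum_(i < n) \sum_(j < n) Kf (i, j) * dirichlet_form x)).
  apply: ler_sum => i _; apply: (le_trans (sqr_le_sum_sqr_sub x i x_sum0)).
  by apply: ler_sum => j _; case: (HKf (i, j)) => _ /(_ x).
under eq_bigr do rewrite -mulr_suml.
rewrite -mulr_suml mulrDl mul1r lerDr.
exact: dirichlet_form_ge0.
Qed.

End DirichletForm.

Section KuramotoVectorField.
Context {R : realType} {n : nat} (a : 'I_n -> 'I_n -> R) (omega : 'I_n -> R).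

Lemma sum_kuramoto_rhs x : (forall i j, a i j = a j i) -> \sum_(i < n) omega i = 0 ->
  \sum_(i < n) kuramoto_rhs a omega x i = 0.
Proof.
move=> a_sym omega_sum0; rewrite /kuramoto_rhs sumrB omega_sum0 sum_antisym_eq0 ?subr0 //.
by move=> i j; rewrite a_sym -mulrN -sinN opprB.
Qed.

Lemma norm_kuramoto_rhs_le x i : (forall j, 0 <= a i j) ->
  `|kuramoto_rhs a omega x i| <= `|omega i| + \sum_(j < n) a i j.
Proof.
move=> a_ge0; apply: (le_trans (ler_normB _ _)); rewrite lerD2l.
apply: (le_trans (ler_norm_sum _ _ _)); apply: ler_sum => j _.
by rewrite normrM ger0_norm // ler_piMr // ler_norml sin_le1 sin_geN1.
Qed.

Lemma dirichlet_form_cos_weighted_ge (gamma : R) x y :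
  (forall i j, 0 <= a i j) -> 0 <= gamma -> gamma < pi / 2 -> DeltaG a gamma x ->
  cos gamma * dirichlet_form a y <=
  \sum_(i < n) \sum_(j < n) a i j * cos (x i - x j) * (y i - y j) ^+ 2.
Proof.
move=> a_ge0 g0 gpi Hx; rewrite /dirichlet_form mulr_sumr; apply: ler_sum => i _.
rewrite mulr_sumr; apply: ler_sum => j _; rewrite mulrA [cos gamma * a i j]mulrC.
apply: ler_wpM2r; first exact: sqr_ge0.
have [<-|aij] := eqVneq 0 (a i j); first by rewrite !mul0r.
have a_pos : 0 < a i j by rewrite lt_neqAle aij a_ge0.
by rewrite ler_pM2l //; apply: cos_ge_circ_le => //; exact: Hx.
Qed.

End KuramotoVectorField.

Section KuramotoTrajectory.
Context {R : realType} {n : nat} (a : 'I_n -> 'I_n -> R) (omega : 'I_n -> R)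
  (theta : R -> 'I_n -> R).
Hypothesis a_sym : forall i j, a i j = a j i.
Hypothesis theta_ode : forall t : R, 0 < t -> forall i,
  is_derive t 1 (fun s => theta s i) (kuramoto_rhs a omega (theta t) i).

Local Notation nu t := (kuramoto_rhs a omega (theta t)).

Lemma is_derive_kuramoto_freq {t : R} i : 0 < t ->
  is_derive t 1 (fun s => nu s i)
    (- \sum_(j < n) a i j * cos (theta t i - theta t j) * (nu t i - nu t j)).
Proof.
move=> t0.
have Hs j : is_derive t 1 (fun s => a i j * sin (theta s i - theta s j))
    (a i j * cos (theta t i - theta t j) * (nu t i - nu t j)).
  have Hdiff := is_deriveB (theta_ode _ t0 i) (theta_ode _ t0 j).
  apply: is_derive_eq (is_deriveZ (a i j) (is_derive1_comp (is_derive_sin _) Hdiff)) _.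
  by rewrite /GRing.scale /= mulrA.
have := is_deriveB (is_derive_cst (omega i) t 1) (is_derive_sum Hs).
by rewrite fct_sumE sub0r.
Qed.

Lemma is_derive_freq_energy {t : R} : 0 < t ->
  is_derive t 1 (fun s => \sum_(i < n) nu s i ^+ 2)
    (- \sum_(i < n) \sum_(j < n)
         a i j * cos (theta t i - theta t j) * (nu t i - nu t j) ^+ 2).
Proof.
move=> t0.
have Hi i : is_derive t 1 (fun s => nu s i ^+ 2) ((2 * nu t i) *
    - \sum_(j < n) a i j * cos (theta t i - theta t j) * (nu t i - nu t j)).
  by apply: is_derive_eq (is_deriveX 2 (is_derive_kuramoto_freq i t0)) _.
have := is_derive_sum Hi; rewrite fct_sumE.
rewrite -(sum_mul_sym_weighted_diff (fun i j => a i j * cos (theta t i - theta t j))).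
  by rewrite -sumrN; under eq_bigr do rewrite mulrN.
by move=> i j; rewrite a_sym -cosN opprB.
Qed.

Section PhaseCohesive.
Variable gamma : R.
Hypotheses (a_ge0 : forall i j, 0 <= a i j) (a_conn : forall i j, connect (edge_rel a) i j).
Hypotheses (omega_sum0 : \sum_(i < n) omega i = 0) (gamma_ge0 : 0 <= gamma).
Hypotheses (gamma_lt : gamma < pi / 2) (theta_cohesive : forall t : R, 0 < t -> DeltaG a gamma (theta t)).

Lemma freq_energy_exp_decay : exists2 lam, 0 < lam & forall s t, 0 < s -> s <= t ->
  \sum_(i < n) nu t i ^+ 2 <= (\sum_(i < n) nu s i ^+ 2) * expR (- (lam * (t - s))).
Proof.
have [K K0 HK] := poincare_dirichlet_form a a_ge0 a_conn.
have cg0 : 0 < cos gamma.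
  by apply: cos_gt0_pihalf; rewrite gamma_lt andbT (lt_le_trans _ gamma_ge0) // oppr_lt0 divr_gt0 ?pi_gt0.
exists (cos gamma / K); first exact: divr_gt0.
apply: gronwall_exp_decay (fun t t0 => is_derive_freq_energy t0) _ => t t0.
have := dirichlet_form_cos_weighted_ge a gamma _ (nu t) a_ge0 gamma_ge0 gamma_lt (theta_cohesive _ t0).
rewrite lerN2; apply: le_trans.
rewrite mulrAC -mulrA ler_pM2l // ler_pdivrMr // mulrC.
exact: HK (sum_kuramoto_rhs a omega _ a_sym omega_sum0).
Qed.

Lemma freq_exp_decay : exists D mu, 0 < mu /\
  forall t, 0 < t -> forall i, `|nu t i| <= D * expR (- (mu * t)).
Proof.
have [lam lam0 Hdecay] := freq_energy_exp_decay.
pose B := \sum_(i < n) (`|omega i| + \sum_(j < n) a i j) ^+ 2.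
have B0 : 0 <= B by apply: sumr_ge0 => i _; exact: sqr_ge0.
have HB s : \sum_(i < n) nu s i ^+ 2 <= B.
  apply: ler_sum => i _; rewrite -real_normK ?num_real // ler_sqr ?nnegrE ?normr_ge0 //.
    exact: norm_kuramoto_rhs_le.
  by rewrite addr_ge0 ?sumr_ge0.
have HV t : 0 < t -> \sum_(i < n) nu t i ^+ 2 <= B * expR lam * expR (- (lam * t)).
  move=> t0; rewrite -mulrA -expRD.
  case: (leP 1 t) => t1.
    apply: (le_trans (Hdecay _ _ ltr01 t1)).
    have -> : lam - lam * t = - (lam * (t - 1)) by ring.
    by rewrite ler_pM2r ?expR_gt0.
  apply: (le_trans (HB t)); rewrite ler_peMr // -expR0 ler_expR.
  have : lam * t <= lam * 1 by rewrite ler_pM2l // ltW.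
  lra.
exists (1 + B * expR lam), (lam / 2); split => [|t t0 i]; first by rewrite divr_gt0.
apply: norm_le_of_sqr_le_exp_decay; first by rewrite mulr_ge0 // ltW // expR_gt0.
rewrite [2 * _]mulrC divfK ?pnatr_eq0 //; apply: le_trans (HV t t0).
exact: (ler_term_sum (fun k => nu t k ^+ 2)) (fun k => sqr_ge0 _).
Qed.

End PhaseCohesive.

End KuramotoTrajectory.

Section ExponentialLimit.
Context {R : realType} {n : nat} {theta : R -> 'I_n -> R} {L : 'I_n -> R} {C mu : R}.
Hypothesis mu_gt0 : 0 < mu.
Hypothesis theta_cvg : forall t : R, 0 < t -> forall i,
  `|theta t i - L i| <= C * expR (- (mu * t)).

Lemma exp_cvg_sub {t : R} i j : 0 < t ->
  `|(theta t i - theta t j) - (L i - L j)| <= 2 * C * expR (- (mu * t)).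
Proof.
move=> t0; have -> : (theta t i - theta t j) - (L i - L j) =
    (theta t i - L i) - (theta t j - L j) by ring.
apply: (le_trans (ler_normB _ _)).
by have := theta_cvg _ t0 i; have := theta_cvg _ t0 j; lra.
Qed.

Lemma exp_cvg_equilibrium {a omega} {D : R} : (forall i j, 0 <= a i j) ->
  (forall t : R, 0 < t -> forall i,
     `|kuramoto_rhs a omega (theta t) i| <= D * expR (- (mu * t))) ->
  is_equilibrium a omega L.
Proof.
move=> a_ge0 freq_decay i; apply/eqP; rewrite -normr_le0.
apply: (le_of_le_add_exp_decay (D + \sum_(j < n) a i j * (2 * C)) 1 mu_gt0).
move=> t t1; have t0 : 0 < t := lt_le_trans ltr01 t1; rewrite add0r.
have -> : kuramoto_rhs a omega L i = kuramoto_rhs a omega (theta t) i +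
    \sum_(j < n) a i j * (sin (theta t i - theta t j) - sin (L i - L j)).
  rewrite /kuramoto_rhs (eq_bigr _ (fun j _ => mulrBr (a i j) _ _)) sumrB; ring.
apply: (le_trans (ler_normD _ _)); rewrite mulrDl mulr_suml.
apply: lerD; first exact: freq_decay.
apply: (le_trans (ler_norm_sum _ _ _)); apply: ler_sum => j _.
rewrite normrM ger0_norm // -mulrA ler_wpM2l //.
exact: le_trans (ler_dist_sin _ _) (exp_cvg_sub i j t0).
Qed.

(* The winding number k realising circ_le at time t varies by less than one
   turn once the phases are within (pi - gamma) / 2 of their limits. *)
Lemma exp_cvg_DeltaG {a} {gamma : R} : gamma < pi ->
  (forall t : R, 0 < t -> DeltaG a gamma (theta t)) -> DeltaG a gamma L.
Proof.
move=> gamma_lt cohesive i j ij; set d := L i - L j.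
have [T T0 HT] := exp_decay_eventually_lt (2 * C) mu_gt0
  (ltac:(by rewrite divr_gt0 ?subr_gt0) : 0 < (pi - gamma) / 2).
have Hk t : 0 < t -> exists k : int,
    `|d - k%:~R * (2 * pi)| <= gamma + 2 * C * expR (- (mu * t)).
  move=> t0; have [k Hk] := cohesive t t0 i j ij; exists k.
  have -> : d - k%:~R * (2 * pi) = (theta t i - theta t j - k%:~R * (2 * pi)) -
      ((theta t i - theta t j) - d) by ring.
  by apply: (le_trans (ler_normB _ _)); have := exp_cvg_sub i j t0; lra.
have [k1 Hk1] := Hk T T0; exists k1.
apply: (le_of_le_add_exp_decay (2 * C) T mu_gt0) => t Tt.
have [k Hkt] := Hk t (lt_le_trans T0 Tt).
suff <- : k = k1 by [].
apply: (@intr_inj_dist_lt1 R); have pi2 : 0 < 2 * pi :> R by rewrite mulr_gt0 ?pi_gt0.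
rewrite -(ltr_pM2r pi2) mul1r -{1}(gtr0_norm pi2) -normrM.
have -> : (k%:~R - k1%:~R) * (2 * pi) =
    (d - k1%:~R * (2 * pi)) - (d - k%:~R * (2 * pi)) :> R by ring.
by apply: (le_lt_trans (ler_normB _ _)); have := HT t Tt; have := HT T (lexx T); lra.
Qed.

Lemma exp_cvg_converges_to_class : converges_to_class theta L.
Proof.
move=> e e0; have [T T0 HT] := exp_decay_eventually_lt C mu_gt0 e0.
exists T => t Tt; exists 0 => i; exists 0.
rewrite mul0r subr0 addr0; apply: le_lt_trans (HT t Tt).
exact: theta_cvg (lt_le_trans T0 Tt) i.
Qed.

End ExponentialLimit.

Theorem mainTheorem7 (R : realType) (n : nat) (a : 'I_n -> 'I_n -> R)
  (omega : 'I_n -> R) (theta : R -> 'I_n -> R) (gamma : R) :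
  (forall i j, a i j = a j i) ->
  (forall i j, 0 <= a i j) ->
  (forall i j, connect (edge_rel a) i j) ->
  \sum_(i < n) omega i = 0 ->
  0 <= gamma -> gamma < pi / 2 ->
  (forall t : R, 0 < t -> forall i : 'I_n,
      is_derive t 1 (fun s => theta s i) (kuramoto_rhs a omega (theta t) i)) ->
  (forall t : R, 0 <= t -> DeltaG a gamma (theta t)) ->
  exists thstar : 'I_n -> R,
    [/\ is_equilibrium a omega thstar,
        DeltaG a gamma thstar,
        (exists C lam : R, 0 < lam /\
           forall t : R, 0 < t -> forall i j : 'I_n,
             `|derive1 (fun s => theta s i) t - derive1 (fun s => theta s j) t|
               <= C * expR (- (lam * t)))
      & converges_to_class theta thstar].
Proof.
move=> a_sym a_ge0 a_conn omega_sum0 gamma_ge0 gamma_lt theta_ode cohesive.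
have cohesive_pos t : 0 < t -> DeltaG a gamma (theta t) by move/ltW; exact: cohesive.
have [D [mu [mu0 freq_decay]]] := freq_exp_decay a omega theta a_sym theta_ode gamma a_ge0 a_conn
  omega_sum0 gamma_ge0 gamma_lt cohesive_pos.
have /choice [L HL] : forall i, exists Li, forall t, 0 < t ->
    `|theta t i - Li| <= D / mu * expR (- (mu * t)).
  move=> i; apply: exp_rate_limit mu0 (fun t t0 => theta_ode t t0 i) _.
  by move=> t t0; exact: freq_decay.
have theta_cvg t : 0 < t -> forall i, `|theta t i - L i| <= D / mu * expR (- (mu * t)).
  by move=> t0 i; exact: HL.
exists L; split.
- exact: (exp_cvg_equilibrium mu0 theta_cvg a_ge0 freq_decay).
- apply: (exp_cvg_DeltaG mu0 theta_cvg _ cohesive_pos).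
  by have := pi_gt0 R; lra.
- exists (2 * D), mu; split => // t t0 i j.
  rewrite !derive1E !(@derive_val _ _ _ _ _ _ _ (theta_ode t t0 _)).
  apply: (le_trans (ler_normB _ _)).
  by have := freq_decay t t0 i; have := freq_decay t t0 j; lra.
- exact: exp_cvg_converges_to_class mu0 theta_cvg.
Qed.
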